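(* The multiplicative extension of $B^-$ is a Hopf algebra epimorphism $B^-:\mathcal N_{\mathcal A}\twoheadrightarrow\mathcal H_{CK}$.
   Context: $\mathcal N_{\mathcal A}$ is the natural Hopf algebra of the operad of rooted trees. As an algebra it is the polynomial algebra on generators $t_{\tau(T)}$, one per isomorphism type of rooted tree, with the one-vertex tree equal to $1$. Its coproduct is multiplicative with $\Delta(t_{\tau(T)})=\sum_b t_{\tau(a_b(2))}\otimes t_{\tau(T_b(1))}$. The sum is over all colorings $b$ of the edges of $T$ by $\{1,2\}$ such that the edges of color $1$ form a subtree containing the root (possibly just the root). $T_b(1)$ is the rooted tree obtained by contracting each connected component of the color-$2$ edges (and each vertex not incident to any color-$2$ edge) to a single vertex, i.e. the tree of color-$1$ edges on these blocks. $a_b(2)$ is the forest of rooted trees formed by the color-$2$ components (with singleton trees contributing $1$). $\mathcal H_{CK}$ is the Connes–Kreimer Hopf algebra: the polynomial algebra on generators $t_{\tau(T)}$ for unlabelled rooted trees $T$, with the empty tree equal to $1$. Its coproduct is multiplicative with $\Delta_{CK}(t_{\tau(T)})=\sum_{b_v}t_{\tau(a_{b_v}(2))}\otimes t_{\tau(T_{b_v}(1))}$. The sum is over all colorings $b_v$ of the vertices of $T$ by $\{1,2\}$ such that the vertices of color $1$ induce a rooted subtree containing the root, or the empty set. $T_{b_v}(1)$ is that subtree, and $a_{b_v}(2)$ is the forest induced by the color-$2$ vertices, with $t$ of a forest the product over its trees. $B^-(t_{\tau(T)})=\prod_{j=1}^kt_{\tau(T_j)}$, where $T_1,\dots,T_k$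 are the subtrees of $T$ rooted at the children of the root. In particular, $B^-$ of the one-vertex tree is $1$. *)

From HB Require Import structures.
From mathcomp Require Import all_boot all_order all_algebra.
Set Implicit Arguments. Unset Strict Implicit. Unset Printing Implicit Defensive.
Import GRing.Theory.
Local Open Scope ring_scope.

(* Plane representatives of (nonempty) rooted trees: a root together   *)
(* with the list of subtrees rooted at its children.                   *)
Inductive rtree := Node of seq rtree.

Definition children (t : rtree) : seq rtree := let: Node ts := t in ts.

Fixpoint rtree_enc (t : rtree) : GenTree.tree unit :=
  let: Node ts := t in GenTree.Node 0 (map rtree_enc ts).
Fixpoint rtree_dec (g : GenTree.tree unit) : rtree :=
  match g with
  | GenTree.Leaf _ => Node [::]
  | GenTree.Node _ gs => Node (map rtree_dec gs)
  end.
Lemma rtree_encK : cancel rtree_enc rtree_dec.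
Proof.
rewrite /cancel; fix IH 1; case=> ts /=; congr Node; elim: ts => //= t ts IHts.
by rewrite IH IHts.
Qed.
HB.instance Definition _ := Countable.copy rtree (can_type rtree_encK).

(* Canonical representative of the isomorphism type tau(T) of a rooted  *)
(* tree: children canonicalised recursively and then sorted (by the     *)
(* injective code pickle).  canon T1 = canon T2 iff T1 ~= T2.           *)
Definition rtree_le (a b : rtree) : bool := (pickle a <= pickle b)%N.
Fixpoint canon (t : rtree) : rtree :=
  let: Node ts := t in Node (sort rtree_le (map canon ts)).

Definition is_leaf (t : rtree) : bool := nilp (children t).

(* Elements of the polynomial algebras are represented as formal finite *)
(* sums  sum_i c_i * t_{T_i1} ... t_{T_ik}, i.e. lists of (coefficient, *)
(* monomial), a monomial being a list of trees (a forest).  Two formal  *)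
(* sums denote the same element iff all their coefficients agree.       *)
Section Algebras.
Variable R : fieldType.

Definition fsum := seq (R * seq rtree).
Definition fsum2 := seq (R * (seq rtree * seq rtree)). (* tensor square *)

(* Keys of monomials.  In N_A the one-vertex tree equals 1, so it is     *)
(* discarded; in H_CK every tree is a generator (empty forest = 1).     *)
Definition keyN (m : seq rtree) : seq rtree := map canon (filter (fun t => ~~ is_leaf t) m).
Definition keyH (m : seq rtree) : seq rtree := map canon m.

Definition coefN (p : fsum) (m : seq rtree) : R :=
  \sum_(x <- p | perm_eq (keyN x.2) (keyN m)) x.1.
Definition coefH (p : fsum) (m : seq rtree) : R :=
  \sum_(x <- p | perm_eq (keyH x.2) (keyH m)) x.1.
Definition coefHH (P : fsum2) (m : seq rtree * seq rtree) : R :=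
  \sum_(x <- P | perm_eq (keyH x.2.1) (keyH m.1) && perm_eq (keyH x.2.2) (keyH m.2)) x.1.

Definition eqN (p q : fsum) : Prop := forall m, coefN p m = coefN q m.
Definition eqH (p q : fsum) : Prop := forall m, coefH p m = coefH q m.
Definition eqHH (P Q : fsum2) : Prop := forall m, coefHH P m = coefHH Q m.

Definition fmul (p q : fsum) : fsum := [seq (x.1 * y.1, x.2 ++ y.2) | x <- p, y <- q].
Definition fone : fsum := [:: (1, [::])].
Definition fmul2 (P Q : fsum2) : fsum2 :=
  [seq (x.1 * y.1, (x.2.1 ++ y.2.1, x.2.2 ++ y.2.2)) | x <- P, y <- Q].
Definition fone2 : fsum2 := [:: (1, ([::], [::]))].

Definition epsN (p : fsum) : R := \sum_(x <- p | nilp (keyN x.2)) x.1.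
Definition epsH (p : fsum) : R := \sum_(x <- p | nilp x.2) x.1.

Definition coprod_ext (gen : rtree -> fsum2) (p : fsum) : fsum2 :=
  flatten [seq [seq (x.1 * y.1, y.2) | y <- foldr (fun t acc => fmul2 (gen t) acc) fone2 x.2]
          | x <- p].
End Algebras.

(* Edge colourings of N_A.  For T = Node ts, each child edge is either  *)
(* of colour 2 (then, by the subtree condition, the whole child subtree *)
(* lies in the colour-2 component of the root) or of colour 1 (then the *)
(* child subtree carries an admissible colouring recursively).          *)
(* ecut T lists, for every admissible colouring b, the pair             *)
(* (forest a_b(2) as a list of trees, tree T_b(1)).                     *)
(* Accumulator: (colour-2 children of the root, colour-2 components     *)
(*  from colour-1 children, contracted trees of colour-1 children).     *)
Definition ecut_step (c : rtree) (cc : seq (seq rtree * rtree))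
    (acc : seq (seq rtree * seq rtree * seq rtree)) :=
  [seq (c :: a.1.1, a.1.2, a.2) | a <- acc] ++
  [seq (a.1.1, fr.1 ++ a.1.2, fr.2 :: a.2) | fr <- cc, a <- acc].

Fixpoint ecut (t : rtree) : seq (seq rtree * rtree) :=
  let: Node ts := t in
  [seq (Node a.1.1 :: a.1.2, Node a.2)
  | a <- foldr (fun p acc => ecut_step p.1 p.2 acc) [:: ([::], [::], [::])]
                [seq (c, ecut c) | c <- ts]].

(* Admissible vertex colourings for H_CK: either all vertices have      *)
(* colour 2 (forest T, empty subtree), or the root has colour 1 and each *)
(* child subtree carries an admissible colouring.  vcut T lists pairs    *)
(* (forest a_{b_v}(2), subtree T_{b_v}(1) or None when empty).          *)
Definition vcut_step (cc : seq (seq rtree * option rtree))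
    (acc : seq (seq rtree * seq rtree)) :=
  [seq (fr.1 ++ a.1, if fr.2 is Some r then r :: a.2 else a.2) | fr <- cc, a <- acc].

Fixpoint vcut (t : rtree) : seq (seq rtree * option rtree) :=
  let: Node ts := t in
  ([:: Node ts], None) ::
  [seq (a.1, Some (Node a.2))
  | a <- foldr (fun cc acc => vcut_step cc acc) [:: ([::], [::])]
                [seq vcut c | c <- ts]].

Section Maps.
Variable R : fieldType.

(* coproduct of N_A on generators: sum_b t_{a_b(2)} (x) t_{T_b(1)} *)
Definition DeltaN_gen (t : rtree) : fsum2 R :=
  [seq (1, (x.1, [:: x.2])) | x <- ecut t].
Definition DeltaH_gen (t : rtree) : fsum2 R :=
  [seq (1, (x.1, if x.2 is Some r then [:: r] else [::])) | x <- vcut t].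

Definition DeltaN : fsum R -> fsum2 R := coprod_ext DeltaN_gen.
Definition DeltaH : fsum R -> fsum2 R := coprod_ext DeltaH_gen.

Definition Bminus_mon (m : seq rtree) : seq rtree := flatten (map children m).
Definition Bminus (p : fsum R) : fsum R := [seq (x.1, Bminus_mon x.2) | x <- p].
Definition Bminus2 (P : fsum2 R) : fsum2 R :=
  [seq (x.1, (Bminus_mon x.2.1, Bminus_mon x.2.2)) | x <- P].
End Maps.

From Pilot Require Import Defs.
From HB Require Import structures.
From mathcomp Require Import all_boot all_order all_algebra.
Import GRing.Theory.
Local Open Scope ring_scope.

(* A bialgebra map between
   Hopf algebras preserves antipodes, so it suffices to show that B^- is well
   defined, multiplicative, compatible with coproducts and counits, and onto.
   - Coproducts (the combinatorial heart): for T with root-children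
     T_1 ... T_k, admissible edge colourings of T correspond one-to-one to
     admissible vertex colourings of T with colour-1 root, a colour-2 root
     edge corresponding to a colour-2 child subtree, in such a way that
     B^-(a_b(2)) ~ a_{b_v}(2) and B^-(T_b(1)) ~ T_{b_v}(1).  This is stated
     as a relational lifting all2 between the two cut enumerations, proved by
     induction on T, and pushed through products and linear combinations.
   - Multiplicativity, counits and surjectivity are direct: B^-(t_T) = 1
     exactly when T is the one-vertex tree, and B^- of the tree grafting a
     forest on a new root is that forest.
   - Well-definedness: the H_CK-monomial B^-(m) only depends on the N_A-shape
     of m, and sums over shape-invariant predicates are constant on
     N_A-classes (group the terms by shape). *)

Section RelationalLifting.
Variables (A B : Type).

Lemma all2_map2 (C D : Type) (r : C -> D -> bool) (f : A -> C) (g : B -> D)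
    (s : seq A) (t : seq B) :
  all2 r (map f s) (map g t) = all2 (fun x y => r (f x) (g y)) s t.
Proof. by elim: s t => [|x s IH] [|y t] //=; rewrite IH. Qed.

Lemma all2_mapl (C : Type) (r : C -> B -> bool) (f : A -> C) (s : seq A) (t : seq B) :
  all2 r (map f s) t = all2 (fun x y => r (f x) y) s t.
Proof. by elim: s t => [|x s IH] [|y t] //=; rewrite IH. Qed.

Lemma all2_impl (r1 r2 : A -> B -> bool) (s : seq A) (t : seq B) :
  (forall x y, r1 x y -> r2 x y) -> all2 r1 s t -> all2 r2 s t.
Proof. by move=> r12; elim: s t => [|x s IH] [|y t] //= /andP[/r12 -> /IH]. Qed.

Lemma all2_cat (r : A -> B -> bool) (s1 s2 : seq A) (t1 t2 : seq B) :
  all2 r s1 t1 -> all2 r s2 t2 -> all2 r (s1 ++ s2) (t1 ++ t2).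
Proof. by elim: s1 t1 => [|x s IH] [|y t] //= /andP[-> /IH]. Qed.

Lemma all2_flatten (r : A -> B -> bool) (S : seq (seq A)) (T : seq (seq B)) :
  all2 (all2 r) S T -> all2 r (flatten S) (flatten T).
Proof. by elim: S T => [|x S IH] [|y T] //= /andP[H /IH]; apply: all2_cat. Qed.
End RelationalLifting.

Lemma all2_allpairs (A B C D E F : Type) (r1 : A -> B -> bool)
    (r2 : C -> D -> bool) (r : E -> F -> bool) (f : A -> C -> E)
    (g : B -> D -> F) (s : seq A) (s' : seq B) (t : seq C) (t' : seq D) :
  (forall x x' y y', r1 x x' -> r2 y y' -> r (f x y) (g x' y')) ->
  all2 r1 s s' -> all2 r2 t t' ->
  all2 r [seq f x y | x <- s, y <- t] [seq g x y | x <- s', y <- t'].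
Proof.
move=> fg + tt'; elim: s s' => [|x s IH] [|x' s'] //= /andP[xx' /IH ss'].
by apply: all2_cat => //; rewrite all2_map2; apply: all2_impl tt' => y y'; apply: fg.
Qed.

Lemma big_partition_seq {V : nmodType} {I K : eqType} (s : seq I) (ks : seq K)
    (g : I -> K) (P : pred K) (F : I -> V) :
  uniq ks -> {subset map g s <= ks} ->
  \sum_(i <- s | P (g i)) F i = \sum_(k <- ks | P k) \sum_(i <- s | g i == k) F i.
Proof.
move=> ks_uniq g_ks; under [RHS]eq_bigr do rewrite big_mkcond.
rewrite exchange_big /= big_mkcond; apply: eq_big_seq => i i_s.
have gi_ks : g i \in ks by apply: g_ks; apply: map_f.
rewrite (big_rem (g i)) //= eqxx big1_seq ?addr0 => [|k /andP[_ k_rem]].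
  by case: (P (g i)).
by rewrite ifF //; apply: contraTF k_rem => /eqP <-; rewrite mem_rem_uniqF.
Qed.

Lemma rtree_le_total : total rtree_le.
Proof. by move=> a b; apply: leq_total. Qed.
Lemma rtree_le_trans : transitive rtree_le.
Proof. by move=> a b c; apply: leq_trans. Qed.
Lemma rtree_le_anti : antisymmetric rtree_le.
Proof. by move=> a b /anti_leq/(pcan_inj (@pickleK _)). Qed.

Lemma perm_sort_rtree (s1 s2 : seq rtree) :
  perm_eq s1 s2 = (sort rtree_le s1 == sort rtree_le s2).
Proof.
exact: (sameP (perm_sortP rtree_le_total rtree_le_trans rtree_le_anti _ _) eqP).
Qed.

Definition keq (a b : seq rtree) : bool := perm_eq (keyH a) (keyH b).

Lemma keyH_cat (a b : seq rtree) : keyH (a ++ b) = keyH a ++ keyH b.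
Proof. exact: map_cat. Qed.

Lemma keq_cat {a a' b b' : seq rtree} : keq a a' -> keq b b' -> keq (a ++ b) (a' ++ b').
Proof. by rewrite /keq !keyH_cat; apply: perm_cat. Qed.

Lemma canon_keq {a b : seq rtree} : keq a b -> canon (Node a) = canon (Node b).
Proof. by rewrite /keq perm_sort_rtree => /eqP /= ->. Qed.

Lemma Bminus_mon_cons (t : rtree) (m : seq rtree) :
  Bminus_mon (t :: m) = children t ++ Bminus_mon m.
Proof. by []. Qed.

Lemma Bminus_mon_cat (a b : seq rtree) :
  Bminus_mon (a ++ b) = Bminus_mon a ++ Bminus_mon b.
Proof. by rewrite /Bminus_mon map_cat flatten_cat. Qed.

(* Enumerations of the cuts of a tree Node ts in terms of its children ts:
   admissible edge colourings (the triples accumulated by ecut) and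
   admissible vertex colourings in which the root has colour 1 (the pairs
   accumulated by vcut). *)
Definition edge_cuts (ts : seq rtree) : seq (seq rtree * seq rtree * seq rtree) :=
  foldr (fun p acc => ecut_step p.1 p.2 acc) [:: ([::], [::], [::])]
        [seq (c, ecut c) | c <- ts].
Definition vertex_cuts (ts : seq rtree) : seq (seq rtree * seq rtree) :=
  foldr (fun cc acc => vcut_step cc acc) [:: ([::], [::])] [seq vcut c | c <- ts].

Lemma ecutE (ts : seq rtree) :
  ecut (Node ts) = [seq (Node a.1.1 :: a.1.2, Node a.2) | a <- edge_cuts ts].
Proof. by []. Qed.
Lemma vcutE (ts : seq rtree) :
  vcut (Node ts) = ([:: Node ts], None) :: [seq (a.1, Some (Node a.2)) | a <- vertex_cuts ts].
Proof. by []. Qed.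

(* Correspondence of a cut of the children of a root: B^- of the colour-2
   forest (root-children of colour 2, plus B^- of the deeper colour-2
   components) is the colour-2 forest of the vertex cut, and the contracted
   colour-1 children are the children of the colour-1 subtree. *)
Definition cut_rel (a : seq rtree * seq rtree * seq rtree) (b : seq rtree * seq rtree) : bool :=
  keq (a.1.1 ++ Bminus_mon a.1.2) b.1 && keq a.2 b.2.

(* Correspondence of a cut of one child c through a colour-1 edge: the vertex
   cut of c keeps the root of c in colour 1. *)
Definition child_rel (fr : seq rtree * rtree) (fr' : seq rtree * option rtree) : bool :=
  keq (Bminus_mon fr.1) fr'.1 &&
  (if fr'.2 is Some r then canon fr.2 == canon r else false).

(* Adding a child c: colour-2 edge to c <-> c entirely of colour 2, and
   colour-1 edge with a cut of c <-> root of c of colour 1 with that cut. *)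
Lemma cut_rel_step (c : rtree) (cc : seq (seq rtree * rtree))
    (cc' : seq (seq rtree * option rtree)) (acc : seq (seq rtree * seq rtree * seq rtree))
    (acc' : seq (seq rtree * seq rtree)) :
  all2 child_rel cc cc' -> all2 cut_rel acc acc' ->
  all2 cut_rel (ecut_step c cc acc) (vcut_step (([:: c], None) :: cc') acc').
Proof.
move=> ccc' accc'; rewrite /ecut_step /vcut_step /=; apply: all2_cat.
  rewrite all2_map2; apply: all2_impl accc' => a b /andP[k1 k2].
  by rewrite /cut_rel /= k2 andbT /keq /= perm_cons.
apply: all2_allpairs ccc' accc' => [[f1 f2] [g1 g2] [[a1 a2] a3] [b1 b2]].
case: g2 => [g2|] /andP[//= kf /eqP canon_f] /andP[/= ka kb].
rewrite /cut_rel /= Bminus_mon_cat; apply/andP; split.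
  by rewrite /keq -(permPr (keq_cat kf ka)) !keyH_cat perm_catCA.
by rewrite /keq /= canon_f perm_cons.
Qed.

Lemma child_rel_ecut (cs : seq rtree) :
  all2 cut_rel (edge_cuts cs) (vertex_cuts cs) ->
  all2 child_rel (ecut (Node cs)) (behead (vcut (Node cs))).
Proof.
move=> IH; rewrite ecutE vcutE /= all2_map2; apply: all2_impl IH => a b /andP[k1 k2].
by rewrite /child_rel /= k1 /=; apply/eqP; apply: canon_keq.
Qed.

Lemma edge_vertex_cuts (t : rtree) :
  all2 cut_rel (edge_cuts (children t)) (vertex_cuts (children t)).
Proof.
move: t; fix IH 1; case=> ts; elim: ts => [|c ts IHts] //=.
have -> : vertex_cuts (c :: ts) =
    vcut_step (([:: c], None) :: behead (vcut c)) (vertex_cuts ts) by case: c.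
apply: cut_rel_step IHts; case: c (IH c) => cs; exact: child_rel_ecut.
Qed.

Section Coproduct.
Variable R : fieldType.

Definition term_rel (x y : R * (seq rtree * seq rtree)) : bool :=
  (x.1 == y.1) && keq x.2.1 y.2.1 && keq x.2.2 y.2.2.

Lemma term_rel_mul (x x' y y' : R * (seq rtree * seq rtree)) :
  term_rel x x' -> term_rel y y' ->
  term_rel (x.1 * y.1, (x.2.1 ++ y.2.1, x.2.2 ++ y.2.2))
           (x'.1 * y'.1, (x'.2.1 ++ y'.2.1, x'.2.2 ++ y'.2.2)).
Proof.
move=> /andP[/andP[/eqP ex kx1] kx2] /andP[/andP[/eqP ey ky1] ky2].
by rewrite /term_rel /= ex ey eqxx !keq_cat.
Qed.

Lemma all2_eqHH {P Q : fsum2 R} : all2 term_rel P Q -> eqHH P Q.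
Proof.
move=> PQ m; rewrite /coefHH; elim: P Q PQ => [|x P IH] [|y Q] //=.
move=> /andP[/andP[/andP[/eqP e k1] k2] /IH PQ].
by rewrite !big_cons e (permPl k1) (permPl k2) PQ.
Qed.

Definition gen_prod (gen : rtree -> fsum2 R) (m : seq rtree) : fsum2 R :=
  foldr (fun t acc => fmul2 (gen t) acc) (fone2 R) m.

Lemma fmul2_1l (P : fsum2 R) : fmul2 (fone2 R) P = P.
Proof. by rewrite /fmul2 /= cats0; elim: P => //= [[c [a b]] P ->]; rewrite mul1r. Qed.

Lemma fmul2A (P Q S : fsum2 R) : fmul2 (fmul2 P Q) S = fmul2 P (fmul2 Q S).
Proof.
rewrite /fmul2; elim: P => //= x P IH; rewrite allpairs_cat IH; congr (_ ++ _) => {IH}.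
elim: Q => //= y Q IHQ; rewrite map_cat IHQ -map_comp; congr (_ ++ _).
by apply: eq_map => z /=; rewrite mulrA !catA.
Qed.

Lemma gen_prod_cat (gen : rtree -> fsum2 R) (a b : seq rtree) :
  gen_prod gen (a ++ b) = fmul2 (gen_prod gen a) (gen_prod gen b).
Proof. by elim: a => /= [|t a ->]; rewrite ?fmul2_1l ?fmul2A. Qed.

Lemma Bminus2_fmul2 (P Q : fsum2 R) :
  Bminus2 (fmul2 P Q) = fmul2 (Bminus2 P) (Bminus2 Q).
Proof.
rewrite /Bminus2 /fmul2; elim: P => //= x P IH; rewrite map_cat IH; congr (_ ++ _).
by rewrite -!map_comp; apply: eq_map => y /=; rewrite !Bminus_mon_cat.
Qed.

Lemma gen_prod_DeltaH (ts : seq rtree) :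
  gen_prod (@DeltaH_gen R) ts = [seq (1, h) | h <- vertex_cuts ts].
Proof.
elim: ts => //= c ts IH.
have -> : vertex_cuts (c :: ts) = vcut_step (vcut c) (vertex_cuts ts) by [].
rewrite IH /fmul2 /DeltaH_gen /vcut_step.
elim: (vcut c) => //= x s ->; rewrite map_cat; congr (_ ++ _).
by rewrite -!map_comp; apply: eq_map => y /=; rewrite mulr1; case: x.2.
Qed.

Lemma Bminus_DeltaN_gen (t : rtree) :
  all2 term_rel (Bminus2 (DeltaN_gen R t)) (gen_prod (@DeltaH_gen R) (children t)).
Proof.
rewrite gen_prod_DeltaH /Bminus2 /DeltaN_gen; case: t => ts; rewrite ecutE -!map_comp.
rewrite all2_map2; apply: all2_impl (edge_vertex_cuts (Node ts)) => a b /andP[k1 k2].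
by rewrite /term_rel /= eqxx k1 /Bminus_mon /= cats0.
Qed.

Lemma Bminus_DeltaN_mon (m : seq rtree) :
  all2 term_rel (Bminus2 (gen_prod (@DeltaN_gen R) m))
                (gen_prod (@DeltaH_gen R) (Bminus_mon m)).
Proof.
elim: m => [|t m IH]; first by rewrite /= /term_rel eqxx.
rewrite Bminus_mon_cons gen_prod_cat /= Bminus2_fmul2.
exact: all2_allpairs term_rel_mul (Bminus_DeltaN_gen t) IH.
Qed.

Lemma Bminus_coproduct (p : fsum R) : eqHH (DeltaH (Bminus p)) (Bminus2 (DeltaN p)).
Proof.
suff PQ : all2 term_rel (Bminus2 (DeltaN p)) (DeltaH (Bminus p)).
  by move=> m; rewrite (all2_eqHH PQ).
rewrite /DeltaH /DeltaN /coprod_ext /Bminus /Bminus2 map_flatten -!map_comp.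
apply: all2_flatten; rewrite all2_map2; elim: p => //= x p ->; rewrite andbT.
rewrite -map_comp all2_map2.
have := Bminus_DeltaN_mon x.2; rewrite /Bminus2 all2_mapl; apply: all2_impl.
by move=> y y' /andP[/andP[/eqP /= e k1] k2]; rewrite /term_rel /= e eqxx k1 k2.
Qed.
End Coproduct.

Section AlgebraMap.
Variable R : fieldType.

Lemma Bminus_fmul (p q : fsum R) : Bminus (fmul p q) = fmul (Bminus p) (Bminus q).
Proof.
rewrite /Bminus /fmul; elim: p => //= x p IH; rewrite map_cat IH; congr (_ ++ _).
by rewrite -!map_comp; apply: eq_map => y /=; rewrite Bminus_mon_cat.
Qed.

Lemma nilp_Bminus_mon (m : seq rtree) : nilp (Bminus_mon m) = nilp (keyN m).
Proof.
elim: m => //= t m IH; rewrite Bminus_mon_cons /nilp size_cat addn_eq0.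
by move: IH; rewrite /nilp => ->; rewrite /keyN; case: t => [[|c cs]].
Qed.

Lemma Bminus_counit (p : fsum R) : epsH (Bminus p) = epsN p.
Proof.
by rewrite /epsH /epsN /Bminus big_map; apply: eq_bigl => x; rewrite /= nilp_Bminus_mon.
Qed.

Lemma Bminus_graft (q : fsum R) : Bminus [seq (x.1, [:: Node x.2]) | x <- q] = q.
Proof.
by rewrite /Bminus -map_comp; elim: q => //= -[c m] q ->; rewrite /Bminus_mon /= cats0.
Qed.
End AlgebraMap.

(* The N_A-shape of a monomial: its multiset of isomorphism types of trees,
   one-vertex trees (= 1) discarded, in sorted form.  Two monomials are equal
   in N_A iff they have the same shape. *)
Definition shapeN (m : seq rtree) : seq rtree := sort rtree_le (keyN m).

Lemma sum_shape_eqN (R : fieldType) (p q : fsum R) (P : pred (seq rtree)) :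
  eqN p q -> \sum_(x <- p | P (shapeN x.2)) x.1 = \sum_(x <- q | P (shapeN x.2)) x.1.
Proof.
move=> pq; set ks := undup [seq shapeN x.2 | x <- p ++ q].
have sub_ks (r : fsum R) : {subset r <= p ++ q} -> {subset [seq shapeN x.2 | x <- r] <= ks}.
  by move=> rpq _ /mapP[x xr ->]; rewrite mem_undup; apply: map_f; apply: rpq.
rewrite !(big_partition_seq _ ks (fun x : R * seq rtree => shapeN x.2) P) ?undup_uniq //.
- rewrite big_seq_cond [RHS]big_seq_cond; apply: eq_bigr => k /andP[].
  rewrite mem_undup => /mapP[y _ ->] _.
  have coef_shape (r : fsum R) :
      Defs.coefN r y.2 = \sum_(x <- r | shapeN x.2 == shapeN y.2) x.1.
    by apply: eq_bigl => x; rewrite perm_sort_rtree.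
  by rewrite -!coef_shape pq.
- by apply: sub_ks => x xq; rewrite mem_cat xq orbT.
- by apply: sub_ks => x xp; rewrite mem_cat xp.
Qed.

(* Up to order, the key of B^-(m) is the list of root-children of the trees in
   the shape of m; in particular it only depends on the shape of m. *)
Lemma keyH_Bminus_mon (m : seq rtree) :
  perm_eq (keyH (Bminus_mon m)) (flatten (map children (shapeN m))).
Proof.
have keyN_shape : perm_eq (flatten (map children (keyN m))) (flatten (map children (shapeN m))).
  by apply/perm_flatten/perm_map; rewrite perm_sym perm_sort.
apply: perm_trans keyN_shape; elim: m => //= t m IH.
rewrite Bminus_mon_cons keyH_cat /keyN /=; case: t => -[|c cs] //=.
by rewrite -cat_cons; apply: perm_cat IH; rewrite perm_sym perm_sort.
Qed.

Lemma Bminus_eqN (R : fieldType) (p q : fsum R) : eqN p q -> eqH (Bminus p) (Bminus q).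
Proof.
move=> pq m; rewrite /coefH /Bminus !big_map /=.
pose P k := perm_eq (flatten (map children k)) (keyH m).
have key_shape (x : R * seq rtree) : perm_eq (keyH (Bminus_mon x.2)) (keyH m) = P (shapeN x.2).
  by rewrite (permPl (keyH_Bminus_mon x.2)).
under eq_bigl do rewrite key_shape; under [RHS]eq_bigl do rewrite key_shape.
exact: sum_shape_eqN.
Qed.

Theorem mainTheorem12 (R : fieldType) :
  (* well defined on N_A *)
  (forall p q : fsum R, eqN p q -> eqH (Bminus p) (Bminus q)) /\
  (* algebra morphism *)
  (forall p q : fsum R, eqH (Bminus (fmul p q)) (fmul (Bminus p) (Bminus q))) /\
  eqH (Bminus (fone R)) (fone R) /\
  (* coalgebra morphism *)
  (forall p : fsum R, eqHH (DeltaH (Bminus p)) (Bminus2 (DeltaN p))) /\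
  (forall p : fsum R, epsH (Bminus p) = epsN p) /\
  (* surjective *)
  (forall q : fsum R, exists p : fsum R, eqH (Bminus p) q).
Proof.
split; first exact: Bminus_eqN.
split; first by move=> p q m; rewrite Bminus_fmul.
split; first by [].
split; first exact: Bminus_coproduct.
split; first exact: Bminus_counit.
by move=> q; exists [seq (x.1, [:: Node x.2]) | x <- q]; rewrite Bminus_graft.
Qed.
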